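(* Let $J=V+\sqrt{-1}S$ be a complex positive semidefinite matrix with $V=\mathrm{Re}\,J$ strictly positive. Then $J\#J^\top=V^{1/2}\{I+(V^{-1/2}SV^{-1/2})^2\}^{1/2}V^{1/2}$.
   Context: $P\#Q$ is the operator geometric mean: $P^{1/2}(P^{-1/2}QP^{-1/2})^{1/2}P^{1/2}$ for positive definite $P,Q$ and $\lim_{\epsilon\downarrow0}(P+\epsilon I)\#(Q+\epsilon I)$ for positive semidefinite $P,Q$. *)

From HB Require Import structures.
From mathcomp Require Import all_boot all_order all_algebra.
From mathcomp Require Import reals.
From mathcomp Require Import complex.
From Stdlib Require Import ClassicalEpsilon.
Set Implicit Arguments. Unset Strict Implicit. Unset Printing Implicit Defensive.
Import Order.TTheory GRing.Theory Num.Theory.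
Local Open Scope ring_scope.

Section MatrixDefs.
Variable R : realType.
Local Notation C := (R[i]).

Definition adjmx (m n : nat) (A : 'M[C]_(m, n)) : 'M[C]_(n, m) :=
  (map_mx (fun z : C => z^*) A)^T.

Definition psdmx (n : nat) (A : 'M[C]_n) : Prop :=
  adjmx A = A /\ forall x : 'cV[C]_n, 0 <= (adjmx x *m A *m x) ord0 ord0.

Definition pdmx (n : nat) (A : 'M[C]_n) : Prop :=
  adjmx A = A /\ forall x : 'cV[C]_n, x != 0 -> 0 < (adjmx x *m A *m x) ord0 ord0.

(* the positive semidefinite square root A^{1/2} of a psd matrix A
   (chosen by classical choice among psd B with B B = A; 0 if none) *)
Definition sqrtmx (n : nat) (A : 'M[C]_n) : 'M[C]_n :=
  epsilon (inhabits 0) (fun B => psdmx B /\ B *m B = A).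

Definition Remx (m n : nat) (A : 'M[C]_(m, n)) : 'M[C]_(m, n) := map_mx (fun z => 'Re z) A.
Definition Immx (m n : nat) (A : 'M[C]_(m, n)) : 'M[C]_(m, n) := map_mx (fun z => 'Im z) A.

Definition gmean_pd (n : nat) (P Q : 'M[C]_n) : 'M[C]_n :=
  let P12 := sqrtmx P in
  let Pm12 := invmx P12 in
  P12 *m sqrtmx (Pm12 *m Q *m Pm12) *m P12.

(* P # Q = G for psd P, Q:  G = lim_{eps -> 0+} (P + eps I) # (Q + eps I)
   (epsilon-delta limit, entrywise) *)
Definition is_gmean (n : nat) (P Q G : 'M[C]_n) : Prop :=
  forall e : R, 0 < e -> exists d : R, 0 < d /\
    forall eps : R, 0 < eps -> eps < d ->
      forall i j, `| gmean_pd (P + (eps%:C)%C%:M) (Q + (eps%:C)%C%:M) i j - G i j | < (e%:C)%C.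

End MatrixDefs.

From mathcomp Require Import all_boot all_order all_algebra.
From mathcomp Require Import reals complex sesquilinear spectral ring.
From Stdlib Require Import ClassicalEpsilon FunctionalExtensionality.
Set Implicit Arguments. Unset Strict Implicit. Unset Printing Implicit Defensive.
Import Order.TTheory GRing.Theory Num.Theory Num.Def.
Local Open Scope ring_scope.
Local Open Scope sesquilinear_scope.

(* Put V_x = V + x and T_x = V_x^{-1/2} S V_x^{-1/2} for x > 0.  Then
   J + x = V_x^{1/2} (1 + iT_x) V_x^{1/2} and J^T + x = V_x^{1/2} (1 - iT_x) V_x^{1/2},
   where iT_x is Hermitian and 1 +- iT_x are positive semidefinite because J and J^T
   are.  The geometric mean commutes with congruences, and on simultaneously
   diagonalized matrices it is the entrywise square root of the product; so
   (J + x) # (J^T + x) = V_x^{1/2} ((1 + iT_x)(1 - iT_x))^{1/2} V_x^{1/2}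
                       = V_x^{1/2} (1 + T_x^2)^{1/2} V_x^{1/2}.
   Letting x -> 0+ only needs continuity of the positive square root, which follows
   from the entrywise estimate |B1 - B2|^2 <= n^4 max |B1^2 - B2^2| for psd B1, B2. *)

(** * Positive semidefinite matrices, square roots and geometric means *)

Section PsdMatrices.
Variable C : numClosedFieldType.

Lemma trmxC_mul m p q (A : 'M[C]_(m, p)) (B : 'M[C]_(p, q)) :
  (A *m B)^t* = B^t* *m A^t*.
Proof. by rewrite trmx_mul map_mxM. Qed.

Lemma trmxCD m p (A B : 'M[C]_(m, p)) : (A + B)^t* = A^t* + B^t*.
Proof. by rewrite linearD map_mxD. Qed.

Lemma trmxCN m p (A : 'M[C]_(m, p)) : (- A)^t* = - A^t*.
Proof. by rewrite linearN map_mxN. Qed.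

Lemma trmxCZ m p a (A : 'M[C]_(m, p)) : (a *: A)^t* = a^* *: A^t*.
Proof. by rewrite linearZ map_mxZ. Qed.

Lemma trmxC_scalar m a : (a%:M : 'M[C]_m)^t* = a^*%:M.
Proof. by rewrite tr_scalar_mx map_scalar_mx. Qed.

Definition psd n (A : 'M[C]_n) :=
  A^t* = A /\ forall x : 'cV[C]_n, 0 <= (x^t* *m A *m x) ord0 ord0.

Definition pd n (A : 'M[C]_n) :=
  A^t* = A /\ forall x : 'cV[C]_n, x != 0 -> 0 < (x^t* *m A *m x) ord0 ord0.

Lemma psd_herm n (A : 'M[C]_n) : psd A -> A^t* = A. Proof. by case. Qed.

Lemma psd_form_ge0 n (A : 'M[C]_n) (x : 'cV[C]_n) : psd A ->
  0 <= (x^t* *m A *m x) ord0 ord0.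
Proof. by case=> _; apply. Qed.

Lemma psd_congr m n (A : 'M[C]_n) (K : 'M[C]_(n, m)) : psd A -> psd (K^t* *m A *m K).
Proof.
case=> hA qA; split; first by rewrite !trmxC_mul trmxCK hA mulmxA.
by move=> x; have := qA (K *m x); rewrite trmxC_mul !mulmxA.
Qed.

Lemma pd_congr n (A K : 'M[C]_n) : pd A -> K \in unitmx -> pd (K^t* *m A *m K).
Proof.
case=> hA qA uK; split; first by rewrite !trmxC_mul trmxCK hA mulmxA.
move=> x x0; have Kx0 : K *m x != 0.
  by apply: contra_neq x0 => Kx0; rewrite -(mulKmx uK x) Kx0 mulmx0.
by have := qA _ Kx0; rewrite trmxC_mul !mulmxA.
Qed.

Lemma form_shift n (A : 'M[C]_n) (x : 'cV[C]_n) a :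
  (x^t* *m (A + a%:M) *m x) ord0 ord0
  = (x^t* *m A *m x) ord0 ord0 + a * (x^t* *m x) ord0 ord0.
Proof. by rewrite mulmxDr mulmxDl mul_mx_scalar -scalemxAl !mxE. Qed.

Lemma form_idE n (x : 'cV[C]_n) : (x^t* *m x) ord0 ord0 = \sum_i `|x i ord0| ^+ 2.
Proof. by rewrite mxE; apply: eq_bigr => i _; rewrite !mxE mulrC -normCK. Qed.

Lemma form_id_ge0 n (x : 'cV[C]_n) : 0 <= (x^t* *m x) ord0 ord0.
Proof. by rewrite form_idE sumr_ge0 // => i _; apply: exprn_ge0. Qed.

Lemma form_id_gt0 n (x : 'cV[C]_n) : x != 0 -> 0 < (x^t* *m x) ord0 ord0.
Proof.
move=> x0; have [j xj] : exists j, x j ord0 != 0.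
  apply/existsP; apply: contraR x0 => /existsPn x0.
  by apply/eqP/matrixP=> i k; rewrite ord1 mxE; apply/eqP/negbNE.
rewrite form_idE (bigD1 j) //= ltr_pwDl ?exprn_gt0 ?normr_gt0 //.
by apply: sumr_ge0 => i _; apply: exprn_ge0.
Qed.

Lemma psd_shift n (A : 'M[C]_n) a : psd A -> 0 <= a -> psd (A + a%:M).
Proof.
move=> pA a0; split.
  by rewrite trmxCD trmxC_scalar psd_herm // (CrealP (ger0_real a0)).
by move=> x; rewrite form_shift addr_ge0 ?psd_form_ge0 ?mulr_ge0 ?form_id_ge0.
Qed.

Lemma pd_shift n (A : 'M[C]_n) a : psd A -> 0 < a -> pd (A + a%:M).
Proof.
move=> pA a0; split.
  by rewrite trmxCD trmxC_scalar psd_herm // (CrealP (gtr0_real a0)).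
move=> x x0; rewrite form_shift ltr_wpDl ?psd_form_ge0 //.
by rewrite mulr_gt0 ?form_id_gt0.
Qed.

Lemma psd_tr n (A : 'M[C]_n) : psd A -> psd A^T.
Proof.
case=> hA qA; split; first by rewrite -{2}hA map_trmx !trmxK.
move=> x; have := qA (map_mx conjC x).
have e1 : (map_mx conjC x)^t* = x^T by apply/matrixP=> i j; rewrite !mxE conjCK.
have e2 : (x^t*)^T = map_mx conjC x by apply/matrixP=> i j; rewrite !mxE.
have -> : (x^t* *m A^T *m x) ord0 ord0 = ((x^t* *m A^T *m x)^T) ord0 ord0.
  by rewrite [RHS]mxE.
by rewrite !trmx_mul trmxK e1 e2 mulmxA.
Qed.

(* Locked, so that rewriting with associativity of [*m] cannot unfold it. *)
Fact udiag_key : unit. Proof. by []. Qed.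
Definition udiag n (U : 'M[C]_n) (d : 'I_n -> C) : 'M[C]_n :=
  locked_with udiag_key (U^t* *m diag_mx (\row_k d k) *m U).

Lemma udiagE n (U : 'M[C]_n) d : udiag U d = U^t* *m diag_mx (\row_k d k) *m U.
Proof. exact: locked_withE. Qed.

Lemma herm_udiag n (A : 'M[C]_n) : A^t* = A ->
  exists U d, U \is unitarymx /\ A = udiag U d.
Proof.
move=> hA; have hermA : A \is hermsymmx.
  by apply/is_hermitianmxP; rewrite expr0 scale1r hA.
exists (spectralmx A), (fun k => spectral_diag A ord0 k); split.
  exact: spectral_unitarymx.
have /orthomx_spectralP {1}-> := hermitian_normalmx hermA.
rewrite invmx_unitary ?spectral_unitarymx // udiagE; congr (_ *m diag_mx _ *m _).
by apply/rowP=> k; rewrite mxE.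
Qed.

Lemma eq_udiag n (U : 'M[C]_n) (a b : 'I_n -> C) : a =1 b -> udiag U a = udiag U b.
Proof.
by move=> ab; rewrite !udiagE; congr (_ *m diag_mx _ *m _); apply/rowP=> k; rewrite !mxE ab.
Qed.

Section UnitaryDiag.
Variables (n : nat) (U : 'M[C]_n).
Hypothesis U_unitary : U \is unitarymx.

Lemma unitaryC : U^t* *m U = 1%:M.
Proof. exact/mulmx1C/unitarymxP. Qed.

Lemma udiag_mul a b : udiag U a *m udiag U b = udiag U (fun k => a k * b k).
Proof.
rewrite !udiagE !mulmxA mulmxtVK // -(mulmxA _ (diag_mx _) (diag_mx _)) mulmx_diag.
by congr (_ *m diag_mx _ *m _); apply/rowP=> k; rewrite !mxE.
Qed.

Lemma udiagD a b : udiag U a + udiag U b = udiag U (fun k => a k + b k).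
Proof.
rewrite !udiagE -mulmxDl -mulmxDr -raddfD /=.
by congr (_ *m diag_mx _ *m _); apply/rowP=> k; rewrite !mxE.
Qed.

Lemma udiagN a : - udiag U a = udiag U (fun k => - a k).
Proof.
rewrite !udiagE -mulNmx -mulmxN -raddfN /=.
by congr (_ *m diag_mx _ *m _); apply/rowP=> k; rewrite !mxE.
Qed.

Lemma udiag_cst c : udiag U (fun _ => c) = c%:M.
Proof.
rewrite !udiagE (_ : \row_k c = const_mx c); last by apply/rowP=> k; rewrite !mxE.
by rewrite diag_const_mx mul_mx_scalar -scalemxAl unitaryC scalemx1.
Qed.

Lemma udiag_inv d : (forall k, d k != 0) -> invmx (udiag U d) = udiag U (fun k => (d k)^-1).
Proof.
move=> d0; have h : udiag U d *m udiag U (fun k => (d k)^-1) = 1%:M.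
  by rewrite udiag_mul -udiag_cst; apply: eq_udiag => k; rewrite mulfV.
by rewrite -[LHS]mulmx1 -h mulKmx //; case: (mulmx1_unit h).
Qed.

Lemma udiag_unit d : (forall k, d k != 0) -> udiag U d \in unitmx.
Proof.
move=> d0; have h : udiag U d *m udiag U (fun k => (d k)^-1) = 1%:M.
  by rewrite udiag_mul -udiag_cst; apply: eq_udiag => k; rewrite mulfV.
by case: (mulmx1_unit h).
Qed.

Lemma unitary_row_delta k : U *m (row k U)^t* = delta_mx k ord0.
Proof.
apply/matrixP=> i j; rewrite ord1 !mxE eqxx andbT.
have /matrixP/(_ i k) := unitarymxP U_unitary; rewrite !mxE => <-.
by apply: eq_bigr => l _; rewrite !mxE.
Qed.

Lemma unitary_row_norm k : row k U *m (row k U)^t* = 1%:M.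
Proof.
by apply/matrixP=> i j; rewrite !ord1 -row_mul unitary_row_delta !mxE !eqxx.
Qed.

Lemma udiag_row_eigen d k : udiag U d *m (row k U)^t* = d k *: (row k U)^t*.
Proof.
rewrite !udiagE -mulmxA unitary_row_delta -mulmxA.
have -> : diag_mx (\row_l d l) *m delta_mx k ord0 = d k *: delta_mx k (ord0 : 'I_1).
  apply/matrixP=> i j; rewrite mul_diag_mx !mxE.
  by case: eqP => [->|]; rewrite ?mulr1 ?mulr0 ?andbF.
by rewrite -scalemxAr -unitary_row_delta mulmxA unitaryC mul1mx.
Qed.

Lemma form_udiag_row d k :
  (((row k U)^t*)^t* *m udiag U d *m (row k U)^t*) ord0 ord0 = d k.
Proof.
by rewrite trmxCK -mulmxA udiag_row_eigen -scalemxAr unitary_row_norm !mxE mulr1.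
Qed.

Lemma unitary_entry_le1 i j : `|U i j| <= 1.
Proof.
have h : \sum_l `|U i l| ^+ 2 = 1.
  have /matrixP/(_ i i) := unitarymxP U_unitary; rewrite !mxE eqxx mulr1n => <-.
  by apply: eq_bigr => l _; rewrite normCK !mxE.
rewrite -(expr_le1 (n := 2)) // -h (bigD1 j) //= lerDl.
by apply: sumr_ge0 => l _; apply: exprn_ge0.
Qed.

Lemma psd_udiag d : (forall k, 0 <= d k) -> psd (udiag U d).
Proof.
move=> d0; rewrite udiagE; apply: psd_congr; split.
  rewrite tr_diag_mx map_diag_mx; congr diag_mx; apply/rowP=> k.
  by rewrite !mxE; apply/CrealP/ger0_real.
move=> x; rewrite mxE; apply: sumr_ge0 => i _.
by rewrite mul_mx_diag !mxE mulrAC -normCKC mulr_ge0 ?exprn_ge0.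
Qed.

Lemma psd_udiag_ge0 d : psd (udiag U d) -> forall k, 0 <= d k.
Proof. by move=> pU k; move: (psd_form_ge0 ((row k U)^t*) pU); rewrite form_udiag_row. Qed.

Lemma pd_udiag_gt0 d : pd (udiag U d) -> forall k, 0 < d k.
Proof.
case=> _ qd k; move: (qd ((row k U)^t*)); rewrite form_udiag_row; apply.
have : row k U *m (row k U)^t* != 0 by rewrite unitary_row_norm; exact: oner_neq0.
by apply: contraNneq => ->; rewrite mulmx0.
Qed.

End UnitaryDiag.

Lemma invmx_eq n (A B : 'M[C]_n) : A *m B = 1%:M -> invmx A = B.
Proof. by move=> AB; rewrite -[LHS]mulmx1 -AB mulKmx //; case: (mulmx1_unit AB). Qed.

Lemma invmxM n (A B : 'M[C]_n) : A \in unitmx -> B \in unitmx ->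
  invmx (A *m B) = invmx B *m invmx A.
Proof.
by move=> uA uB; apply: invmx_eq; rewrite mulmxA mulmxK // mulmxV.
Qed.

Lemma trmxC_inv n (A : 'M[C]_n) : (invmx A)^t* = invmx (A^t*).
Proof. by rewrite trmx_inv map_invmx. Qed.

Definition sqrtm n (A : 'M[C]_n) : 'M[C]_n :=
  epsilon (inhabits 0) (fun B => psd B /\ B *m B = A).

Lemma psd_sqrt_exists n (A : 'M[C]_n) : psd A -> exists B, psd B /\ B *m B = A.
Proof.
move=> pA; have [U [d [uU eA]]] := herm_udiag (psd_herm pA).
have d0 : forall k, 0 <= d k by apply: (psd_udiag_ge0 uU); rewrite -eA.
exists (udiag U (fun k => sqrtC (d k))); split.
  by apply: psd_udiag => // k; rewrite sqrtC_ge0.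
by rewrite udiag_mul // eA; apply: eq_udiag => k; rewrite -expr2 sqrtCK.
Qed.

Lemma sqrtm_spec n (A : 'M[C]_n) : psd A -> psd (sqrtm A) /\ sqrtm A *m sqrtm A = A.
Proof. by move/psd_sqrt_exists/(epsilon_spec (inhabits 0)). Qed.

Lemma psd_diff_eigen_bound n (B1 B2 : 'M[C]_n) (u : 'cV[C]_n) l :
  psd B1 -> psd B2 -> (B1 - B2) *m u = l *: u -> u^t* *m u = 1%:M ->
  `|l| ^+ 2 <= `|(u^t* *m (B1 *m B1 - B2 *m B2) *m u) ord0 ord0|.
Proof.
(* With a = u^* B1 u >= 0 and b = u^* B2 u >= 0: l = a - b and
   u^* (B1^2 - B2^2) u = u^* ((B1 - B2) B1 + B2 (B1 - B2)) u = l (a + b). *)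
move=> p1 p2 Du uu.
set a := (u^t* *m B1 *m u) ord0 ord0; set b := (u^t* *m B2 *m u) ord0 ord0.
have a0 : 0 <= a := psd_form_ge0 u p1.
have b0 : 0 <= b := psd_form_ge0 u p2.
have la : l = a - b.
  have : u^t* *m B1 *m u - u^t* *m B2 *m u = l%:M.
    by rewrite -mulmxBl -mulmxBr -mulmxA Du -scalemxAr uu scalemx1.
  by move/matrixP/(_ ord0 ord0); rewrite mxE [X in _ + X = _]mxE [RHS]mxE eqxx mulr1n => <-.
have uD : u^t* *m (B1 - B2) = l *: u^t*.
  have := congr1 (fun M => M^t*) Du; rewrite /= trmxC_mul trmxCD trmxCN.
  rewrite !psd_herm // trmxCZ => ->; congr (_ *: _).
  by apply/CrealP; rewrite la realB ?ger0_real.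
have -> : B1 *m B1 - B2 *m B2 = (B1 - B2) *m B1 + B2 *m (B1 - B2).
  by rewrite mulmxBl mulmxBr addrA subrK.
have -> : (u^t* *m ((B1 - B2) *m B1 + B2 *m (B1 - B2)) *m u) ord0 ord0 = l * (a + b).
  rewrite mulmxDr mulmxDl !mulmxA uD -!mulmxA Du -scalemxAl -!scalemxAr.
  by rewrite !mulmxA mxE [in X in _ + X]mxE [in X in X + _]mxE mulrDr.
rewrite normrM expr2 ler_wpM2l // ger0_norm ?addr_ge0 // la.
by apply: le_trans (ler_normB _ _) _; rewrite !ger0_norm.
Qed.

Lemma form_norm_le n (E : 'M[C]_n) (x : 'cV[C]_n) e :
  (forall i, `|x i ord0| <= 1) -> (forall i j, `|E i j| <= e) ->
  `|(x^t* *m E *m x) ord0 ord0| <= e *+ n ^ 2.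
Proof.
move=> x1 Ee; rewrite mxE (le_trans (ler_norm_sum _ _ _)) //.
have -> : e *+ n ^ 2 = \sum_(j < n) e *+ n by rewrite sumr_const card_ord -mulrnA mulnn.
apply: ler_sum => j _; rewrite mxE mulr_suml (le_trans (ler_norm_sum _ _ _)) //.
have -> : e *+ n = \sum_(i < n) e by rewrite sumr_const card_ord.
apply: ler_sum => i _.
rewrite !mxE !normrM norm_conjC -[X in _ <= X]mul1r -[X in _ <= X]mulr1.
by rewrite !ler_pM ?mulr_ge0.
Qed.

Lemma psd_sqrt_entry_bound n (B1 B2 : 'M[C]_n) e : psd B1 -> psd B2 -> 0 <= e ->
  (forall i j, `|(B1 *m B1 - B2 *m B2) i j| <= e) ->
  forall i j, `|(B1 - B2) i j| ^+ 2 <= e *+ n ^ 4.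
Proof.
move=> p1 p2 e0 Ee i j.
have hermD : (B1 - B2)^t* = B1 - B2 by rewrite trmxCD trmxCN !psd_herm.
have [U [l [uU eD]]] := herm_udiag hermD.
set s := sqrtC (e *+ n ^ 2).
have s0 : 0 <= s by rewrite sqrtC_ge0 mulrn_wge0.
have ls k : `|l k| <= s.
  set u := (row k U)^t*.
  have Du : (B1 - B2) *m u = l k *: u by rewrite eD udiag_row_eigen.
  have uu : u^t* *m u = 1%:M by rewrite trmxCK unitary_row_norm.
  have u1 i' : `|u i' ord0| <= 1 by rewrite !mxE norm_conjC unitary_entry_le1.
  rewrite -(ler_pXn2r (_ : 0 < 2)%N) ?nnegrE // sqrtCK.
  exact: le_trans (psd_diff_eigen_bound p1 p2 Du uu) (form_norm_le u1 Ee).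
have Ds : `|(B1 - B2) i j| <= s *+ n.
  rewrite eD udiagE mxE (le_trans (ler_norm_sum _ _ _)) //.
  have -> : s *+ n = \sum_(k < n) s by rewrite sumr_const card_ord.
  apply: ler_sum => k _; rewrite mul_mx_diag !mxE !normrM norm_conjC.
  rewrite -[s]mul1r -[_ * s]mulr1.
  by rewrite !ler_pM ?mulr_ge0 ?unitary_entry_le1.
apply: le_trans (_ : (s *+ n) ^+ 2 <= _).
  by rewrite lerXn2r ?nnegrE ?mulrn_wge0.
by rewrite -mulr_natr exprMn sqrtCK -natrX mulr_natr -mulrnA -expnD.
Qed.

Lemma psd_sqrt_unique n (B1 B2 : 'M[C]_n) : psd B1 -> psd B2 ->
  B1 *m B1 = B2 *m B2 -> B1 = B2.
Proof.
move=> p1 p2 e12; apply/matrixP=> i j.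
have E0 i' j' : `|(B1 *m B1 - B2 *m B2) i' j'| <= 0 by rewrite e12 subrr mxE normr0.
have := psd_sqrt_entry_bound p1 p2 (lexx 0) E0 i j; rewrite mul0rn !mxE => D0.
by apply/eqP; rewrite -subr_eq0 -normr_eq0 -sqrf_eq0 eq_le D0 exprn_ge0.
Qed.

Lemma sqrtm_eq n (A B : 'M[C]_n) : psd B -> B *m B = A -> sqrtm A = B.
Proof.
move=> pB BB; have [pA AA] : psd (sqrtm A) /\ sqrtm A *m sqrtm A = A.
  exact: (epsilon_spec (inhabits 0) (fun B => psd B /\ B *m B = A) (ex_intro _ B (conj pB BB))).
by apply: psd_sqrt_unique; rewrite ?AA.
Qed.

Definition gmean n (P Q : 'M[C]_n) : 'M[C]_n :=
  let P12 := sqrtm P in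
  let Pm12 := invmx P12 in
  P12 *m sqrtm (Pm12 *m Q *m Pm12) *m P12.

Lemma sqrtm_unit n (P : 'M[C]_n) : psd P -> P \in unitmx -> sqrtm P \in unitmx.
Proof.
by move=> pP; have [_ e] := sqrtm_spec pP; rewrite -{1}e unitmx_mul => /andP[].
Qed.

Lemma trmxC_invsqrtm n (P : 'M[C]_n) : psd P -> (invmx (sqrtm P))^t* = invmx (sqrtm P).
Proof. by move=> pP; rewrite trmxC_inv psd_herm //; case: (sqrtm_spec pP). Qed.

Lemma gmean_spec n (P Q : 'M[C]_n) : psd P -> P \in unitmx -> psd Q ->
  psd (gmean P Q) /\ gmean P Q *m invmx P *m gmean P Q = Q.
Proof.
move=> pP uP pQ; have u12 := sqrtm_unit pP uP; have hPm := trmxC_invsqrtm pP.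
have [p12 e12] := sqrtm_spec pP.
rewrite /gmean; set P12 := sqrtm P in u12 hPm p12 e12 *; set Pm12 := invmx P12 in hPm *.
have pQ' : psd (Pm12 *m Q *m Pm12) by rewrite -{1}hPm; apply: psd_congr.
have [pZ eZ] := sqrtm_spec pQ'; set Z := sqrtm _ in pZ eZ *.
split; first by rewrite -{1}(psd_herm p12); apply: psd_congr.
rewrite -e12 invmxM // -/Pm12 !mulmxA mulmxK // -(mulmxA _ Z) mulmxKV //.
by rewrite mulmxA -(mulmxA P12 Z Z) eZ !mulmxA mulmxV // mul1mx mulmxKV.
Qed.

Lemma gmean_riccati n (P Q Y : 'M[C]_n) : psd P -> P \in unitmx -> psd Y ->
  Y *m invmx P *m Y = Q -> gmean P Q = Y.
Proof.
move=> pP uP pY YQ; have u12 := sqrtm_unit pP uP; have hPm := trmxC_invsqrtm pP.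
have [_ e12] := sqrtm_spec pP.
rewrite /gmean; set P12 := sqrtm P in u12 hPm e12 *; set Pm12 := invmx P12 in hPm *.
have pZ : psd (Pm12 *m Y *m Pm12) by rewrite -{1}hPm; apply: psd_congr.
have ZZ : Pm12 *m Y *m Pm12 *m (Pm12 *m Y *m Pm12) = Pm12 *m Q *m Pm12.
  have iP : invmx P = Pm12 *m Pm12 by rewrite -e12 invmxM.
  by rewrite -YQ iP !mulmxA.
by rewrite (sqrtm_eq pZ ZZ) !mulmxA mulmxV // mul1mx mulmxKV.
Qed.

Lemma gmean_congr n (P Q K : 'M[C]_n) : psd P -> P \in unitmx -> psd Q -> K \in unitmx ->
  gmean (K^t* *m P *m K) (K^t* *m Q *m K) = K^t* *m gmean P Q *m K.
Proof.
move=> pP uP pQ uK; have [pG GQ] := gmean_spec pP uP pQ.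
set G := gmean P Q in pG GQ *.
have uKt : K^t* \in unitmx by rewrite map_unitmx unitmx_tr.
apply: gmean_riccati.
- exact: psd_congr.
- by rewrite !unitmx_mul uKt uP uK.
- exact: psd_congr.
by rewrite !invmxM ?unitmx_mul ?uKt ?uP // -GQ !mulmxA mulmxK // mulmxKV.
Qed.

Lemma sqrtm_udiag n (U : 'M[C]_n) d : U \is unitarymx -> (forall k, 0 <= d k) ->
  sqrtm (udiag U d) = udiag U (fun k => sqrtC (d k)).
Proof.
move=> uU d0; apply: sqrtm_eq; first by apply: psd_udiag => // k; rewrite sqrtC_ge0.
by rewrite udiag_mul //; apply: eq_udiag => k; rewrite -expr2 sqrtCK.
Qed.

Lemma gmean_udiag n (U : 'M[C]_n) a b : U \is unitarymx ->
  (forall k, 0 < a k) -> (forall k, 0 <= b k) ->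
  gmean (udiag U a) (udiag U b) = udiag U (fun k => sqrtC (a k * b k)).
Proof.
move=> uU a0 b0; have an0 k : a k != 0 by rewrite gt_eqF.
apply: gmean_riccati.
- by apply: psd_udiag => // k; rewrite ltW.
- exact: udiag_unit.
- by apply: psd_udiag => // k; rewrite sqrtC_ge0 mulr_ge0 // ltW.
rewrite udiag_inv // !udiag_mul //; apply: eq_udiag => k.
by rewrite mulrAC -expr2 sqrtCK mulrAC mulfV // mul1r.
Qed.

Lemma one_add_sqr_factor n (M : 'M[C]_n) :
  1%:M + M *m M = (1%:M + 'i *: M) *m (1%:M - 'i *: M).
Proof.
rewrite mulmxDl mul1mx mulmxBr mulmx1 addrA subrK -scalemxAl -scalemxAr scalerA.
by rewrite -expr2 sqrCi scaleN1r opprK.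
Qed.

End PsdMatrices.

(** * Limits at 0+ *)

Section LimitsAtZero.
Variable C : numClosedFieldType.

(* As [0 < x] forces [x] to be real, this is the filter at 0+ along the real axis. *)
Definition near0 (P : C -> Prop) :=
  exists2 d : C, 0 < d & forall x, 0 < x -> x < d -> P x.

Lemma near0_mono (P Q : C -> Prop) :
  (forall x, 0 < x -> P x -> Q x) -> near0 P -> near0 Q.
Proof. by move=> PQ [d d0 hP]; exists d => // x x0 xd; apply/PQ/hP. Qed.

Lemma near0_and (P Q : C -> Prop) : near0 P -> near0 Q -> near0 (fun x => P x /\ Q x).
Proof.
move=> [d1 d10 h1] [d2 d20 h2].
have /orP[d12|d21] := real_leVge (gtr0_real d10) (gtr0_real d20).
  by exists d1 => // x x0 xd; split; [apply: h1 | apply: h2 (lt_le_trans xd d12)].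
by exists d2 => // x x0 xd; split; [apply: h1 (lt_le_trans xd d21) | apply: h2].
Qed.

Lemma near0_forall (T : finType) (P : T -> C -> Prop) :
  (forall t, near0 (P t)) -> near0 (fun x => forall t, P t x).
Proof.
move=> hP; suff: near0 (fun x => forall t, t \in enum T -> P t x).
  by apply: near0_mono => x _ hx t; apply: hx; rewrite mem_enum.
elim: (enum T) => [|t s IHs]; first by exists 1.
apply: near0_mono (near0_and (hP t) IHs) => x _ [Pt Ps] t'.
by rewrite inE => /predU1P[->|]; [apply: Pt | apply: Ps].
Qed.

Definition cvg0 (f : C -> C) (a : C) :=
  forall e, 0 < e -> near0 (fun x => `|f x - a| < e).

Lemma cvg0_eq f g a : (forall x, 0 < x -> f x = g x) -> cvg0 f a -> cvg0 g a.
Proof. by move=> fg fa e /fa; apply: near0_mono => x x0; rewrite fg. Qed.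

Lemma cvg0_cst c : cvg0 (fun _ => c) c.
Proof. by move=> e e0; exists 1 => // x _ _; rewrite subrr normr0. Qed.

Lemma cvg0_add f g a b : cvg0 f a -> cvg0 g b -> cvg0 (fun x => f x + g x) (a + b).
Proof.
move=> fa gb e e0; have e2 : 0 < e / 2 by rewrite divr_gt0.
apply: near0_mono (near0_and (fa _ e2) (gb _ e2)) => x _ [hf hg].
rewrite opprD addrACA (splitr e) (le_lt_trans (ler_normD _ _)) //.
exact: ltrD.
Qed.

Lemma cvg0_mul f g a b : cvg0 f a -> cvg0 g b -> cvg0 (fun x => f x * g x) (a * b).
Proof.
move=> fa gb e e0.
have Kb : 0 < `|b| + 1 by rewrite ltr_wpDl.
have Ka : 0 < `|a| + 1 by rewrite ltr_wpDl.
have e2 : 0 < e / 2 by rewrite divr_gt0.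
have := near0_and (fa _ (divr_gt0 e2 Kb)) (near0_and (gb _ ltr01) (gb _ (divr_gt0 e2 Ka))).
apply: near0_mono => x _ [hf [hg1 hg]].
have gK : `|g x| <= `|b| + 1.
  by rewrite -[g x](subrK b) (le_trans (ler_normD _ _)) // addrC lerD2l ltW.
rewrite (_ : f x * g x - a * b = (f x - a) * g x + a * (g x - b)); last first.
  by rewrite mulrBl mulrBr addrA subrK.
rewrite (splitr e) (le_lt_trans (ler_normD _ _)) // !normrM ltr_leD //.
  rewrite (le_lt_trans (ler_wpM2l (normr_ge0 _) gK)) //.
  by rewrite -ltr_pdivlMr.
have aK : `|a| <= `|a| + 1 by rewrite lerDl.
rewrite (le_trans (ler_pM (normr_ge0 _) (normr_ge0 _) aK (ltW hg))) //.
by rewrite mulrC divfK // gt_eqF.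
Qed.

Lemma cvg0_sum (I : Type) (r : seq I) (F : I -> C -> C) (L : I -> C) :
  (forall i, cvg0 (F i) (L i)) ->
  cvg0 (fun x => \sum_(i <- r) F i x) (\sum_(i <- r) L i).
Proof.
move=> FL; elim: r => [|i r IHr].
  by rewrite big_nil; apply: cvg0_eq (cvg0_cst 0) => x _; rewrite big_nil.
rewrite big_cons; apply: cvg0_eq (cvg0_add (FL i) IHr) => x _.
by rewrite big_cons.
Qed.

Lemma cvg0_inv f a : a != 0 -> cvg0 f a -> cvg0 (fun x => (f x)^-1) a^-1.
Proof.
move=> a0 fa e e0; have na : 0 < `|a| by rewrite normr_gt0.
have na2 : 0 < `|a| / 2 by rewrite divr_gt0.
have := near0_and (fa _ na2) (fa _ (mulr_gt0 e0 (mulr_gt0 na na2))).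
apply: near0_mono => x _ [h1 h2].
have fa2 : `|a| / 2 < `|f x|.
  have : `|a| < `|a| / 2 + `|f x|.
    rewrite -{1}(subrK (f x) a) (le_lt_trans (ler_normD _ _)) // distrC.
    by rewrite ltrD2r.
  by rewrite {1}(splitr `|a|) ltrD2l.
have fx0 : 0 < `|f x| by rewrite (lt_trans na2).
have -> : (f x)^-1 - a^-1 = (a - f x) / (f x * a).
  by field; rewrite a0 -normr_gt0 fx0.
rewrite normrM normfV normrM distrC ltr_pdivrMr ?mulr_gt0 //.
by rewrite (lt_le_trans h2) // ler_wpM2l ?(ltW e0) // mulrC ler_wpM2r // ltW.
Qed.

Lemma cvg0_sqrt (v : C) : 0 < v -> cvg0 (fun x => sqrtC (v + x)) (sqrtC v).
Proof.
move=> v0 e e0; have t0 : 0 < sqrtC v by rewrite sqrtC_gt0.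
exists (e * sqrtC v); first by rewrite mulr_gt0.
move=> x x0 xd; have vx0 : 0 <= v + x by rewrite addr_ge0 ?ltW.
have ts : sqrtC v <= sqrtC (v + x).
  by rewrite ler_sqrtC ?nnegrE ?(ltW v0) // lerDl ltW.
have st : (sqrtC (v + x) - sqrtC v) * (sqrtC (v + x) + sqrtC v) = x.
  by rewrite -subr_sqr !sqrtCK addrAC subrr add0r.
rewrite ger0_norm ?subr_ge0 // -(ltr_pM2r t0) (le_lt_trans _ xd) //.
by rewrite -[X in _ <= X]st ler_wpM2l ?subr_ge0 // lerDr sqrtC_ge0.
Qed.

Definition mcvg0 m p (F : C -> 'M[C]_(m, p)) (A : 'M[C]_(m, p)) :=
  forall i j, cvg0 (fun x => F x i j) (A i j).

Lemma mcvg0_eq m p (F G : C -> 'M[C]_(m, p)) A :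
  (forall x, 0 < x -> F x = G x) -> mcvg0 F A -> mcvg0 G A.
Proof. by move=> FG FA i j; apply: cvg0_eq (FA i j) => x x0; rewrite FG. Qed.

Lemma mcvg0_cst m p (A : 'M[C]_(m, p)) : mcvg0 (fun _ => A) A.
Proof. by move=> i j; apply: cvg0_cst. Qed.

Lemma mcvg0_add m p (F G : C -> 'M[C]_(m, p)) A B :
  mcvg0 F A -> mcvg0 G B -> mcvg0 (fun x => F x + G x) (A + B).
Proof.
move=> FA GB i j; rewrite mxE.
by apply: cvg0_eq (cvg0_add (FA i j) (GB i j)) => x _; rewrite mxE.
Qed.

Lemma mcvg0_mul m p q (F : C -> 'M[C]_(m, p)) (G : C -> 'M[C]_(p, q)) A B :
  mcvg0 F A -> mcvg0 G B -> mcvg0 (fun x => F x *m G x) (A *m B).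
Proof.
move=> FA GB i j; rewrite mxE.
have := cvg0_sum (index_enum 'I_p) (fun k => cvg0_mul (FA i k) (GB k j)).
by apply: cvg0_eq => x _; rewrite mxE.
Qed.

Lemma mcvg0_udiag n (U : 'M[C]_n) (d : C -> 'I_n -> C) (d0 : 'I_n -> C) :
  (forall k, cvg0 (d^~ k) (d0 k)) -> mcvg0 (fun x => udiag U (d x)) (udiag U d0).
Proof.
move=> dd; rewrite udiagE; apply: mcvg0_eq (fun x _ => esym (udiagE U (d x))) _.
apply: mcvg0_mul (mcvg0_cst _); apply: mcvg0_mul (mcvg0_cst _) _.
move=> i j; rewrite !mxE; case: (i =P j) => [<-|/eqP ij].
  by apply: cvg0_eq (dd i) => x _; rewrite !mxE eqxx.
by apply: cvg0_eq (cvg0_cst 0) => x _; rewrite !mxE (negbTE ij).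
Qed.

Lemma mcvg0_near m p (F : C -> 'M[C]_(m, p)) A : mcvg0 F A ->
  forall e, 0 < e -> near0 (fun x => forall i j, `|F x i j - A i j| < e).
Proof.
move=> FA e e0; have := near0_forall (fun ij : 'I_m * 'I_p => FA ij.1 ij.2 e e0).
by apply: near0_mono => x _ h i j; apply: (h (i, j)).
Qed.

Lemma mcvg0_sqrtm n (A : C -> 'M[C]_n) (A0 : 'M[C]_n) :
  (forall x, 0 < x -> psd (A x)) -> psd A0 -> mcvg0 A A0 ->
  mcvg0 (fun x => sqrtm (A x)) (sqrtm A0).
Proof.
move=> pA pA0 AA0 i j e e0.
have N0 : 0 < (n ^ 4)%:R + 1 :> C by rewrite ltr_wpDl.
have eta0 : 0 < e ^+ 2 / ((n ^ 4)%:R + 1) by rewrite divr_gt0 ?exprn_gt0.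
apply: near0_mono (mcvg0_near AA0 eta0) => x x0 hx.
have [p1 e1] := sqrtm_spec (pA x x0); have [p2 e2] := sqrtm_spec pA0.
have E i' j' : `|(sqrtm (A x) *m sqrtm (A x) - sqrtm A0 *m sqrtm A0) i' j'|
    <= e ^+ 2 / ((n ^ 4)%:R + 1) by rewrite e1 e2 !mxE ltW.
have := psd_sqrt_entry_bound p1 p2 (ltW eta0) E i j; rewrite !mxE => h.
rewrite -(ltr_pXn2r (_ : 0 < 2)%N) ?nnegrE ?(ltW e0) // (le_lt_trans h) //.
by rewrite -[_ *+ n ^ 4]mulr_natr mulrAC ltr_pdivrMr // ltr_pM2l ?exprn_gt0 // ltrDl.
Qed.

End LimitsAtZero.

(** * The geometric mean of J + x and J^T + x *)

Section ShiftedMean.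
Variables (C : numClosedFieldType) (n : nat) (J : 'M[C]_n).
Hypothesis J_psd : psd J.
Local Notation V := (map_mx (fun z => 'Re z) J).
Local Notation S := (map_mx (fun z => 'Im z) J).
Variables (U0 : 'M[C]_n) (v : 'I_n -> C).
Hypothesis U0_unitary : U0 \is unitarymx.
Hypothesis V_udiag : V = udiag U0 v.
Hypothesis v_gt0 : forall k, 0 < v k.

Lemma J_rect : J = V + 'i *: S.
Proof. by apply/matrixP=> i j; rewrite !mxE -Crect. Qed.

Lemma trJ_rect : J^T = V - 'i *: S.
Proof.
apply/matrixP=> i j; rewrite !mxE -[J j i]conjCK.
have /matrixP/(_ i j) := psd_herm J_psd; rewrite !mxE => ->.
by rewrite [X in X^*]Crect conjC_rect ?Creal_Re ?Creal_Im // mulNr.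
Qed.

Lemma trmxC_Im : S^t* = - S.
Proof.
apply/matrixP=> i j; rewrite !mxE -[J j i]conjCK.
have /matrixP/(_ i j) := psd_herm J_psd; rewrite !mxE => ->.
by rewrite Im_conj conj_Creal // rpredN Creal_Im.
Qed.

Definition sqrtV x := udiag U0 (fun k => sqrtC (v k + x)).
Definition isqrtV x := udiag U0 (fun k => (sqrtC (v k + x))^-1).
Definition scaledIm x := isqrtV x *m S *m isqrtV x.

Section Shift.
Variable x : C.
Hypothesis x_ge0 : 0 <= x.

Let sqrt_vx_gt0 k : 0 < sqrtC (v k + x).
Proof. by rewrite sqrtC_gt0 ltr_wpDr. Qed.

Lemma sqrtV_psd : psd (sqrtV x).
Proof. by apply: psd_udiag => k; rewrite ltW ?sqrt_vx_gt0. Qed.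

Lemma isqrtV_herm : (isqrtV x)^t* = isqrtV x.
Proof. by apply: psd_herm; apply: psd_udiag => k; rewrite invr_ge0 ltW ?sqrt_vx_gt0. Qed.

Lemma sqrtV_sqr : sqrtV x *m sqrtV x = V + x%:M.
Proof.
rewrite udiag_mul // V_udiag -(udiag_cst U0_unitary) udiagD //.
by apply: eq_udiag => k; rewrite -expr2 sqrtCK.
Qed.

Lemma sqrtV_isqrtV : sqrtV x *m isqrtV x = 1%:M.
Proof.
rewrite udiag_mul // -(udiag_cst U0_unitary).
by apply: eq_udiag => k; rewrite mulfV // gt_eqF ?sqrt_vx_gt0.
Qed.

Lemma isqrtV_sqrtV : isqrtV x *m sqrtV x = 1%:M.
Proof. exact: mulmx1C sqrtV_isqrtV. Qed.

Lemma sqrtV_unit : sqrtV x \in unitmx.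
Proof. by case: (mulmx1_unit sqrtV_isqrtV). Qed.

Lemma invmx_sqrtV : invmx (sqrtV x) = isqrtV x.
Proof. exact: invmx_eq sqrtV_isqrtV. Qed.

Lemma iscaledIm_herm : ('i *: scaledIm x)^t* = 'i *: scaledIm x.
Proof.
rewrite trmxCZ trmxC_mul isqrtV_herm trmxC_mul isqrtV_herm trmxC_Im conjCi.
by rewrite mulNmx mulmxN scaleNr scalerN opprK mulmxA.
Qed.

Lemma isqrtV_shiftJ : isqrtV x *m (J + x%:M) *m isqrtV x = 1%:M + 'i *: scaledIm x.
Proof.
rewrite J_rect addrAC -sqrtV_sqr mulmxDr mulmxDl !mulmxA isqrtV_sqrtV mul1mx.
by rewrite -mulmxA sqrtV_isqrtV -scalemxAl -scalemxAr mulmxA.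
Qed.

Lemma isqrtV_shift_trJ : isqrtV x *m (J^T + x%:M) *m isqrtV x = 1%:M - 'i *: scaledIm x.
Proof.
rewrite trJ_rect addrAC -sqrtV_sqr mulmxDr mulmxDl !mulmxA isqrtV_sqrtV mul1mx.
by rewrite -mulmxA sqrtV_isqrtV mulNmx mulmxN -scalemxAl -scalemxAr mulmxA.
Qed.

Lemma shiftJE : J + x%:M = sqrtV x *m (1%:M + 'i *: scaledIm x) *m sqrtV x.
Proof.
by rewrite -isqrtV_shiftJ !mulmxA sqrtV_isqrtV mul1mx -mulmxA isqrtV_sqrtV mulmx1.
Qed.

Lemma shift_trJE : J^T + x%:M = sqrtV x *m (1%:M - 'i *: scaledIm x) *m sqrtV x.
Proof.
by rewrite -isqrtV_shift_trJ !mulmxA sqrtV_isqrtV mul1mx -mulmxA isqrtV_sqrtV mulmx1.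
Qed.

Lemma iscaledIm_udiag : exists U h, [/\ U \is unitarymx,
  1%:M + 'i *: scaledIm x = udiag U (fun k => 1 + h k),
  1%:M - 'i *: scaledIm x = udiag U (fun k => 1 - h k),
  forall k, 0 <= 1 + h k /\ 0 <= 1 - h k & 0 < x -> forall k, 0 < 1 + h k].
Proof.
have [U [h [uU eH]]] := herm_udiag iscaledIm_herm.
have ep : 1%:M + 'i *: scaledIm x = udiag U (fun k => 1 + h k).
  by rewrite eH -(udiag_cst uU) udiagD.
have em : 1%:M - 'i *: scaledIm x = udiag U (fun k => 1 - h k).
  by rewrite eH udiagN // -(udiag_cst uU) udiagD.
have pp : psd (udiag U (fun k => 1 + h k)).
  by rewrite -ep -isqrtV_shiftJ -{1}isqrtV_herm; exact/psd_congr/psd_shift.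
have pm : psd (udiag U (fun k => 1 - h k)).
  by rewrite -em -isqrtV_shift_trJ -{1}isqrtV_herm; exact/psd_congr/psd_shift/x_ge0/psd_tr.
exists U, h; split=> // [k|].
  by split; [exact: (psd_udiag_ge0 uU pp) | exact: (psd_udiag_ge0 uU pm)].
move=> x_gt0; apply: (pd_udiag_gt0 uU (d := fun k => 1 + h k)).
rewrite -ep -isqrtV_shiftJ -{1}isqrtV_herm; apply: pd_congr; first exact: pd_shift.
by rewrite -invmx_sqrtV unitmx_inv sqrtV_unit.
Qed.

Lemma psd_one_add_sqr_scaledIm : psd (1%:M + scaledIm x *m scaledIm x).
Proof.
have [U [h [uU ep em h0 _]]] := iscaledIm_udiag.
rewrite one_add_sqr_factor ep em udiag_mul //.
by apply: psd_udiag => // k; have [] := h0 k; apply: mulr_ge0.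
Qed.

End Shift.

Lemma gmean_shift x : 0 < x ->
  gmean (J + x%:M) (J^T + x%:M) = sqrtV x *m sqrtm (1%:M + scaledIm x *m scaledIm x) *m sqrtV x.
Proof.
move=> x_gt0; have x_ge0 := ltW x_gt0.
have [U [h [uU ep em h0 /(_ x_gt0) hpos]]] := iscaledIm_udiag x_ge0.
have pP : psd (udiag U (fun k => 1 + h k)) by apply: psd_udiag => k; apply: ltW.
have uP : udiag U (fun k => 1 + h k) \in unitmx.
  by apply: udiag_unit => // k; rewrite lt0r_neq0.
have hm k : 0 <= 1 - h k by case: (h0 k).
have pQ : psd (udiag U (fun k => 1 - h k)) by apply: psd_udiag.
rewrite shiftJE // shift_trJE // ep em.
have := gmean_congr pP uP pQ (sqrtV_unit x_ge0).
rewrite (psd_herm (sqrtV_psd x_ge0)) => ->.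
rewrite gmean_udiag // one_add_sqr_factor ep em udiag_mul // sqrtm_udiag //.
by move=> k; rewrite mulr_ge0 // ltW.
Qed.

Lemma cvg_sqrtV : mcvg0 sqrtV (sqrtV 0).
Proof. by apply: mcvg0_udiag => k; rewrite addr0; apply: cvg0_sqrt. Qed.

Lemma cvg_isqrtV : mcvg0 isqrtV (isqrtV 0).
Proof.
apply: mcvg0_udiag => k; rewrite addr0.
by apply: cvg0_inv; [rewrite sqrtC_eq0 gt_eqF | exact: cvg0_sqrt].
Qed.

Lemma sqrtV0 : sqrtV 0 = sqrtm V.
Proof.
rewrite V_udiag sqrtm_udiag // => [|k]; last exact: ltW.
by apply: eq_udiag => k; rewrite addr0.
Qed.

Theorem cvg_gmean_shift : mcvg0 (fun x => gmean (J + x%:M) (J^T + x%:M))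
  (sqrtm V *m sqrtm (1%:M + (invmx (sqrtm V) *m S *m invmx (sqrtm V))
                        *m (invmx (sqrtm V) *m S *m invmx (sqrtm V))) *m sqrtm V).
Proof.
rewrite -sqrtV0 invmx_sqrtV // -/(scaledIm 0).
apply: mcvg0_eq (fun x x_gt0 => esym (gmean_shift x_gt0)) _.
have cT : mcvg0 scaledIm (scaledIm 0).
  exact: mcvg0_mul (mcvg0_mul cvg_isqrtV (mcvg0_cst _)) cvg_isqrtV.
apply: mcvg0_mul cvg_sqrtV; apply: mcvg0_mul cvg_sqrtV _.
apply: mcvg0_sqrtm; first by move=> x /ltW; apply: psd_one_add_sqr_scaledIm.
  exact: psd_one_add_sqr_scaledIm.
exact: mcvg0_add (mcvg0_cst _) (mcvg0_mul cT cT).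
Qed.

End ShiftedMean.

Section ComplexMatrices.
Variable R : realType.

Lemma adjmxE m p : @adjmx R m p = fun A => A^t*.
Proof. by apply: functional_extensionality => A; apply: map_trmx. Qed.

Lemma psdmxE n : @psdmx R n = @psd R[i] n.
Proof. by rewrite /psdmx !adjmxE. Qed.

Lemma pdmxE n : @pdmx R n = @pd R[i] n.
Proof. by rewrite /pdmx !adjmxE. Qed.

Lemma sqrtmxE n : @sqrtmx R n = @sqrtm R[i] n.
Proof. by rewrite /sqrtmx psdmxE. Qed.

Lemma gmean_pdE n : @gmean_pd R n = @gmean R[i] n.
Proof. by rewrite /gmean_pd sqrtmxE. Qed.

End ComplexMatrices.

Theorem lemma12 (R : realType) (n : nat) (J : 'M[R[i]]_n) :
  psdmx J -> pdmx (Remx J) ->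
  let V := Remx J in
  let S := Immx J in
  let V12 := sqrtmx V in
  let Vm12 := invmx V12 in
  is_gmean J J^T
    (V12 *m sqrtmx (1%:M + (Vm12 *m S *m Vm12) *m (Vm12 *m S *m Vm12)) *m V12).
Proof.
rewrite psdmxE pdmxE sqrtmxE /is_gmean gmean_pdE => pJ pV e e_gt0.
have [U0 [v [uU0 eV]]] := herm_udiag pV.1.
have v_gt0 : forall k, 0 < v k by apply: (pd_udiag_gt0 uU0); rewrite -eV.
have eC_gt0 : 0 < (e%:C)%C by rewrite ltcR.
have [d d_gt0 hd] := mcvg0_near (cvg_gmean_shift pJ uU0 eV v_gt0) eC_gt0.
have d_real : d \is Num.real := gtr0_real d_gt0.
exists (complex.Re d); split=> [|eps eps_gt0 eps_d i j]; first by rewrite -ltcR RRe_real.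
by apply: hd; rewrite ?ltcR // -(RRe_real d_real) ltcR.
Qed.
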